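(* Let $[Q,P]$ be a dynamical structure function ($Q$ $p\times p$, $P$ $p\times m$, strictly proper) and assume $[I-Q,\ P]$ has only simple poles and has no common poles and zeros. Let $N(s)=C_2(A_2-sI)^{-1}B_2+I$ be a diagonal $p\times p$ transfer matrix (with minimal realisation where $A_2=\mathrm{diag}[a_1,\ldots,a_k]$, $B_2=\mathrm{diag}[b_1,\ldots,b_k]$, $C_2=\mathrm{diag}[c_1,\ldots,c_k]$ obtained by stacking Gilbert realisations of the diagonal entries, each $a_m$ diagonal). If a zero $\lambda_i$ of $[I-Q,\ P]$ with zero direction $v_i^T$ (i.e. $v_i^T[I-Q(\lambda_i),\ P(\lambda_i)]=0$) is cancelled by cascading $N(s)$ (forming $N(s)[I-Q,\ P]$), then $N[j,j](s)$ has a pole at $\lambda_i$ for every $j$ such that $\mathcal{B}(v_i^T)[j]\neq 0$, where $\mathcal{B}(\cdot)$ maps a matrix/vector to its Boolean (zero/nonzero) pattern. *)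

(* transfer matrices are matrices of rational functions
   {fraction {poly C}} over an algebraically closed numeric field C (e.g. C). *)
From HB Require Import structures.
From mathcomp Require Import all_boot all_order all_algebra.
Set Implicit Arguments. Unset Strict Implicit. Unset Printing Implicit Defensive.
Import Order.TTheory GRing.Theory Num.Theory.
Local Open Scope ring_scope.

Notation rfun C := {fraction {poly C}}.
Notation "x %:F" := (@FracField.tofrac _ x) : ring_scope.

Section Defs.
Variable C : numClosedFieldType.

Definition cst (c : C) : rfun C := (c%:P)%:F.
Definition svar : rfun C := ('X)%:F.

Definition analytic_at (f : rfun C) (z : C) : Prop :=
  exists n d : {poly C}, d.[z] != 0 /\ f = n%:F / d%:F.
Definition vanishes_at (f : rfun C) (z : C) : Prop :=
  exists n d : {poly C}, d.[z] != 0 /\ n.[z] = 0 /\ f = n%:F / d%:F.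
Definition has_pole (f : rfun C) (z : C) : Prop := ~ analytic_at f z.

Definition strictly_proper (f : rfun C) : Prop :=
  exists n d : {poly C}, d != 0 /\ (size n < size d)%N /\ f = n%:F / d%:F.

Definition mx_strictly_proper m n (G : 'M[rfun C]_(m, n)) : Prop :=
  forall i j, strictly_proper (G i j).

Definition mx_has_pole m n (G : 'M[rfun C]_(m, n)) (z : C) : Prop :=
  exists i j, has_pole (G i j) z.

Definition mx_simple_poles m n (G : 'M[rfun C]_(m, n)) : Prop :=
  forall i j (z : C), analytic_at ((svar - cst z) * G i j) z.

(* (left) zero of a transfer matrix G at z: there is a rational row vector
   u(s), analytic at z with u(z) <> 0, such that u(s) G(s) is analytic at z
   and vanishes at z (i.e. lim_{s->z} u(s)G(s) = 0). *)
Definition mx_has_zero m n (G : 'M[rfun C]_(m, n)) (z : C) : Prop :=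
  exists u : 'rV[rfun C]_m,
    (forall j, analytic_at (u 0 j) z) /\
    (exists j, ~ vanishes_at (u 0 j) z) /\
    (forall k, vanishes_at ((u *m G) 0 k) z).

Definition no_common_poles_zeros m n (G : 'M[rfun C]_(m, n)) : Prop :=
  forall z, ~ (mx_has_pole G z /\ mx_has_zero G z).

Definition is_dsf p m (Q : 'M[rfun C]_p) (P : 'M[rfun C]_(p, m)) : Prop :=
  mx_strictly_proper Q /\ mx_strictly_proper P /\ (forall i, Q i i = 0).

Definition ss_tf k p q (A : 'M[C]_k) (B : 'M[C]_(k, q)) (Cm : 'M[C]_(p, k))
    (D : 'M[C]_(p, q)) : 'M[rfun C]_(p, q) :=
  map_mx cst Cm *m invmx (map_mx cst A - svar%:M) *m map_mx cst B + map_mx cst D.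

(* (A, B) controllable: the column spaces of B, AB, ..., A^(k-1) B span C^k
   (stated with transposes, as mxalgebra works with row spaces) *)
Definition controllable k q (A : 'M[C]_k) (B : 'M[C]_(k, q)) : Prop :=
  (1%:M <= \sum_(i < k) <<B^T *m (A^T) ^+ i>>)%MS.
Definition observable k p (A : 'M[C]_k) (Cm : 'M[C]_(p, k)) : Prop :=
  controllable A^T Cm^T.
Definition minimal_realisation k p q (A : 'M[C]_k) (B : 'M[C]_(k, q))
    (Cm : 'M[C]_(p, k)) : Prop := controllable A B /\ observable A Cm.

End Defs.

From HB Require Import structures.
From mathcomp Require Import all_boot all_order all_algebra.
Import Order.TTheory GRing.Theory Num.Theory.
Local Open Scope ring_scope.
Local Open Scope quotient_scope.
Set Implicit Arguments. Unset Strict Implicit.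

(* Suppose N[j,j] is analytic at lambda for some j with v_j <> 0.  Write each
   diagonal entry as N[i,i] = (s - lambda)^e_i w_i with w_i analytic and
   nonzero at lambda, and let e be the largest e_i over the support of v, so
   that e >= e_j >= 0.  The row u_i = v_i (s - lambda)^e / N[i,i] is then
   analytic at lambda, nonzero there at a maximising index, and satisfies
   u N = (s - lambda)^e v.  Hence u N [I - Q, P] vanishes at lambda along
   with v [I - Q, P], so lambda is still a zero of N [I - Q, P].  A zero
   diagonal entry N[i,i] yields such a row directly: u = e_i, u N = 0. *)

Lemma fracE (R : idomainType) (x : {fraction R}) :
  exists n d : R, d != 0 /\ x = n%:F / d%:F.
Proof.
elim/quotW: x => -[[n d] /= d_neq0]; exists n, d; split => //.
have tofracE (r : R) : r%:F = \pi_({fraction R}) (Ratio r 1).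
  by rewrite /FracField.tofrac; unlock.
rewrite !tofracE -[(\pi_({fraction R}) _)^-1]FracField.pi_inv -[_ * _]FracField.pi_mul.
apply/eqmodP; rewrite /= FracField.equivfE /FracField.mulf /FracField.invf.
by rewrite !numden_Ratio ?mul1r ?oner_neq0 //= mulr1 mulrC.
Qed.

Section RationalFunctionsAtAPoint.
Variables (C : numClosedFieldType) (z : C).
Implicit Types (f g w : rfun C) (n d : {poly C}).

Definition unit_at f : Prop :=
  exists n d, [/\ n.[z] != 0, d.[z] != 0 & f = n%:F / d%:F].

Local Notation t := (('X - z%:P)%:F : rfun C).

Lemma poly_neq0_horner n : n.[z] != 0 -> n != 0.
Proof. by apply: contraNneq => ->; rewrite horner0. Qed.

Lemma analytic_tofrac n : analytic_at n%:F z.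
Proof. by exists n, 1; rewrite hornerC oner_neq0 tofrac1 invr1 mulr1. Qed.

Lemma analytic_cst c : analytic_at (cst c) z.
Proof. exact: analytic_tofrac. Qed.

Lemma analyticM f g : analytic_at f z -> analytic_at g z -> analytic_at (f * g) z.
Proof.
move=> [n1 [d1 [d1z ->]]] [n2 [d2 [d2z ->]]].
exists (n1 * n2), (d1 * d2); rewrite hornerM mulf_neq0 //.
by rewrite !tofracM invfM mulrACA.
Qed.

Lemma vanishesM f g : analytic_at f z -> vanishes_at g z -> vanishes_at (f * g) z.
Proof.
move=> [n1 [d1 [d1z ->]]] [n2 [d2 [d2z [n2z ->]]]].
exists (n1 * n2), (d1 * d2); rewrite !hornerM n2z mulr0 mulf_neq0 //.
by rewrite !tofracM invfM mulrACA.
Qed.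

Lemma vanishes0 : vanishes_at 0 z.
Proof. by exists 0, 1; rewrite hornerC oner_neq0 horner0 tofrac0 mul0r. Qed.

Lemma unit_at_analytic f : unit_at f -> analytic_at f z.
Proof. by move=> [n [d [_ dz ->]]]; exists n, d. Qed.

Lemma unit_atV f : unit_at f -> unit_at f^-1.
Proof. by move=> [n [d [nz dz ->]]]; exists d, n; rewrite invf_div. Qed.

Lemma unit_atM f g : unit_at f -> unit_at g -> unit_at (f * g).
Proof.
move=> [n1 [d1 [n1z d1z ->]]] [n2 [d2 [n2z d2z ->]]].
exists (n1 * n2), (d1 * d2); rewrite !hornerM !mulf_neq0 //.
by rewrite !tofracM invfM mulrACA.
Qed.

Lemma unit_at_cst c : c != 0 -> unit_at (cst c).
Proof. by exists c%:P, 1; rewrite !hornerC oner_neq0 tofrac1 invr1 mulr1. Qed.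

Lemma unit_at_not_vanishes f : unit_at f -> ~ vanishes_at f z.
Proof.
move=> [n [d [nz dz ->]]] [n' [d' [d'z [n'z /eqP]]]].
rewrite eqr_div ?tofrac_eq0 ?poly_neq0_horner // -!tofracM tofrac_eq => /eqP.
move/(congr1 (horner^~ z)); rewrite !hornerM n'z mul0r; apply/eqP.
exact: mulf_neq0.
Qed.

Lemma t_neq0 : t != 0.
Proof. by rewrite tofrac_eq0 polyXsubC_eq0. Qed.

Lemma rfun_factor f : f != 0 -> exists (e : int) w, unit_at w /\ f = t ^ e * w.
Proof.
move=> f0; have [n [d [d0 fE]]] := fracE f; rewrite {}fE in f0 *.
have n0 : n != 0 by apply: contraNneq f0 => ->; rewrite tofrac0 mul0r.
have [a [g gz ->]] := multiplicity_XsubC n z.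
have [b [h hz ->]] := multiplicity_XsubC d z.
rewrite n0 in gz; rewrite d0 in hz.
exists (a%:Z - b%:Z), (g%:F / h%:F); split; first by exists g, h.
rewrite expfzDr ?t_neq0 // -invr_expz -!exprnP !tofracM !tofracXn invfM.
by rewrite mulrACA mulrC.
Qed.

Lemma analytic_factor_ge0 (e : int) w :
  unit_at w -> analytic_at (t ^ e * w) z -> 0 <= e.
Proof.
case: e => [//|n] w_unit [n' [d' [d'z fE]]]; exfalso.
apply: (unit_at_not_vanishes w_unit).
have -> : w = t ^+ n.+1 * (t ^ Negz n * w).
  by rewrite mulrA NegzE -invr_expz -exprnP mulfV ?mul1r // expf_neq0 ?t_neq0.
rewrite fE mulrA -tofracXn -tofracM.
exists (('X - z%:P) ^+ n.+1 * n'), d'; split=> //.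
by rewrite hornerM horner_exp hornerXsubC subrr expr0n mul0r.
Qed.

Lemma analytic_expz (e : int) : 0 <= e -> analytic_at (t ^ e) z.
Proof. by case: e => // n _; rewrite -exprnP -tofracXn; apply: analytic_tofrac. Qed.

End RationalFunctionsAtAPoint.

Section Cascade.
Variables (C : numClosedFieldType) (z : C) (p m : nat).
Variables (G : 'M[rfun C]_(p, m)) (N : 'M[rfun C]_p) (v : 'rV[C]_p).
Hypothesis v_dir : forall k, vanishes_at ((map_mx (@cst C) v *m G) 0 k) z.

Lemma mx_has_zero_cascade (u : 'rV[rfun C]_p) (phi : rfun C) :
    (forall i, analytic_at (u 0 i) z) -> (exists i, ~ vanishes_at (u 0 i) z) ->
    analytic_at phi z -> u *m N = phi *: map_mx (@cst C) v ->
  mx_has_zero (N *m G) z.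
Proof.
move=> u_an u_nz phi_an uN; exists u; split=> //; split=> // k.
by rewrite mulmxA uN -scalemxAl mxE; apply: vanishesM.
Qed.

Hypothesis N_diag : forall i j, i != j -> N i j = 0.

Lemma mx_has_zero_cascade_singular i : N i i = 0 -> mx_has_zero (N *m G) z.
Proof.
move=> Nii0; have Ni0 l : N i l = 0 by case: (eqVneq i l) => [<-|/N_diag].
apply: (@mx_has_zero_cascade (\row_l cst (l == i)%:R) 0).
- by move=> l; rewrite mxE; apply: analytic_cst.
- exists i; rewrite mxE eqxx; apply/unit_at_not_vanishes/unit_at_cst/oner_neq0.
- by rewrite -tofrac0; apply: analytic_tofrac.
apply/rowP => l; rewrite scale0r !mxE big1 // => i' _; rewrite mxE.
by case: eqP => [->|_]; rewrite ?Ni0 ?mulr0 // /cst polyC0 tofrac0 mul0r.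
Qed.

Lemma mx_has_zero_cascade_nonsingular j : (forall i, N i i != 0) ->
  v 0 j != 0 -> analytic_at (N j j) z -> mx_has_zero (N *m G) z.
Proof.
move=> N_nz vj Nj_an.
have /fin_all_exists [e /fin_all_exists [w Nw]] := fun i => rfun_factor z (N_nz i).
have w_unit i : unit_at z (w i) by case: (Nw i).
have NE i : N i i = ('X - z%:P)%:F ^ e i * w i by case: (Nw i).
case: (@arg_maxP _ _ _ j [pred i | v 0 i != 0] e vj) => i0 vi0 e_max.
have ej_ge0 : 0 <= e j by apply: (analytic_factor_ge0 (w_unit j)); rewrite -NE.
pose phi := ('X - z%:P)%:F ^ e i0 : rfun C.
have uE i : cst (v 0 i) * phi / N i i =
    cst (v 0 i) * ('X - z%:P)%:F ^ (e i0 - e i) * (w i)^-1.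
  by rewrite /phi NE invfM expfzDr ?t_neq0 // -invr_expz !mulrA.
apply: (@mx_has_zero_cascade (\row_i (cst (v 0 i) * phi / N i i)) phi).
- move=> i; rewrite mxE; have [->|vi] := eqVneq (v 0 i) 0.
    by rewrite /cst polyC0 tofrac0 !mul0r -tofrac0; apply: analytic_tofrac.
  rewrite uE; apply: analyticM; last exact/unit_at_analytic/unit_atV.
  apply: analyticM; first exact: analytic_cst.
  by apply: analytic_expz; rewrite subr_ge0; apply: e_max.
- exists i0; rewrite mxE uE subrr expr0z mulr1.
  exact/unit_at_not_vanishes/unit_atM/unit_atV/w_unit/unit_at_cst.
- by apply/analytic_expz/(le_trans ej_ge0)/e_max.
apply/rowP => l; rewrite !mxE (bigD1 l) //= big1 => [|i il].
  by rewrite mxE addr0 (divfK (N_nz l)) mulrC.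
by rewrite (N_diag il) mulr0.
Qed.

Lemma mx_has_zero_diag_cascade j :
  v 0 j != 0 -> analytic_at (N j j) z -> mx_has_zero (N *m G) z.
Proof.
have [/existsP [i /eqP Nii0] _ _ | ] := boolP [exists i, N i i == 0].
  exact: (mx_has_zero_cascade_singular Nii0).
by rewrite negb_exists => /forallP; apply: mx_has_zero_cascade_nonsingular.
Qed.

End Cascade.

Theorem theorem1 (C : numClosedFieldType) (p m : nat)
  (Q : 'M[rfun C]_p) (P : 'M[rfun C]_(p, m))
  (hdsf : is_dsf Q P)
  (hsimple : mx_simple_poles (row_mx (1%:M - Q) P))
  (hnocommon : no_common_poles_zeros (row_mx (1%:M - Q) P))
  (N : 'M[rfun C]_p)
  (hNdiag : forall i j, i != j -> N i j = 0)
  (k : nat) (A2 : 'M[C]_k) (B2 : 'M[C]_(k, p)) (C2 : 'M[C]_(p, k))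
  (hA2diag : is_diag_mx A2)
  (hmin : minimal_realisation A2 B2 C2)
  (hN : N = ss_tf A2 B2 C2 1%:M)
  (lambda : C) (v : 'rV[C]_p)
  (hzero : mx_has_zero (row_mx (1%:M - Q) P) lambda)
  (hv : v != 0)
  (hdir : forall j, vanishes_at ((map_mx (@cst C) v *m row_mx (1%:M - Q) P) 0 j) lambda)
  (hcancel : ~ mx_has_zero (N *m row_mx (1%:M - Q) P) lambda) :
  forall j : 'I_p, v 0 j != 0 -> has_pole (N j j) lambda.
Proof.
(* only the diagonality of N and the zero direction v are needed *)
move=> j vj Nj_an; apply: hcancel.
exact: (mx_has_zero_diag_cascade hdir hNdiag vj Nj_an).
Qed.
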